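(* Let $\varphi$ be an $\mathrm{LTL_{PSL}}$ formula and let $I$ be the set of subformulae of $\varphi$ of the form $s\preceq s'$. Then $\varphi$ is $\mathrm{SLTL}$-satisfiable if and only if there exists a partition $D=(I^+,I^-)$ of $I$ such that $\varphi_D$ is $\mathrm{SLTL}$-satisfiable, where $\varphi_D=\varphi[I^+\mapsto\top,I^-\mapsto\bot]\wedge\chi_D$, $\varphi[I^+\mapsto\top,I^-\mapsto\bot]$ is obtained from $\varphi$ by replacing each member of $I^+$ by $\top$ and each member of $I^-$ by $\bot$, and $\chi_D=G\Big(\bigwedge_{(s\preceq s')\in I^+}(s\preceq s')\wedge\bigwedge_{(s\preceq s')\in I^-}\big(\Diamond_s p_{s,s'}\wedge\neg\Diamond_{s'}p_{s,s'}\big)\Big)$ with each $p_{s,s'}$ a fresh propositional variable not occurring in $\varphi$.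
   Context: Fix a countably infinite set $\mathcal{P}$ of propositional variables and a countably infinite set $\mathcal{S}$ of standpoint symbols containing a distinguished universal standpoint symbol $*$. SLTL formulae: $\varphi ::= p \mid s \preceq s' \mid \neg\varphi \mid \varphi\wedge\varphi \mid \Diamond_s\varphi \mid \Box_s\varphi \mid X\varphi \mid \varphi\,U\,\varphi$ ($p\in\mathcal{P}$, $s,s'\in\mathcal{S}$). A model is $M=(\Pi,\lambda)$ with $\Pi\neq\emptyset$ a set of traces $\sigma:\mathbb{N}\to 2^{\mathcal{P}}$ and $\lambda:\mathcal{S}\to 2^{\Pi}\setminus\{\emptyset\}$, $\lambda( * )=\Pi$. Semantics: $M,\sigma,i\models p$ iff $p\in\sigma(i)$; $M,\sigma,i\models s\preceq s'$ iff $\lambda(s)\subseteq\lambda(s')$; Boolean clauses as usual; $M,\sigma,i\models\Diamond_s\psi$ iff $M,\sigma',i\models\psi$ for some $\sigma'\in\lambda(s)$; $\Box_s$ dually with ''for all''; $M,\sigma,i\models X\psi$ iff $M,\sigma,i+1\models\psi$; $M,\sigma,i\models\psi\,U\,\chi$ iff there is $i'\ge i$ with $M,\sigma,i'\models\chi$ and $M,\sigma,i''\models\psi$ for all $i\le i''<i'$. $G\psi$ abbreviates $\neg(\top\,U\,\neg\psi)$. $\varphi$ is satisfiable iff $M,\sigma,0\models\varphi$ for some $M=(\Pi,\lambda)$, $\sigma\in\Pi$. $\mathrm{LTL_{PSL}}$ is the fragment of SLTL consisting of formulae in which no temporal connective ($X$ or $U$) occurs in the scope of a standpoint modality $\Diamond_s$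 or $\Box_s$. *)

From mathcomp Require Import ssreflect ssrfun ssrbool eqtype ssrnat seq.
Set Implicit Arguments. Unset Strict Implicit. Unset Printing Implicit Defensive.

(* Propositional variables and standpoint symbols are both [nat]
   (countably infinite); the standpoint symbol [0] is the universal [*]. *)
Definition prop_var := nat.
Definition stp := nat.
Definition universal : stp := 0.

Inductive form : Type :=
  | Var   : prop_var -> form
  | Sharp : stp -> stp -> form
  | Neg   : form -> form
  | And   : form -> form -> form
  | Dia   : stp -> form -> form
  | Box   : stp -> form -> form
  | Next  : form -> form
  | Until : form -> form -> form.

Definition ftop : form := Neg (And (Var 0) (Neg (Var 0))).
Definition fbot : form := Neg ftop.
Definition G (f : form) : form := Neg (Until ftop (Neg f)).
Definition bigAnd (l : seq form) : form := foldr And ftop l.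

Definition trace := nat -> prop_var -> Prop.

Record model := Model {
  Pi : trace -> Prop;
  lam : stp -> trace -> Prop;
  Pi_nonempty : exists sg, Pi sg;
  lam_sub : forall s sg, lam s sg -> Pi sg;
  lam_nonempty : forall s, exists sg, lam s sg;
  lam_universal : forall sg, lam universal sg <-> Pi sg
}.

Fixpoint sat (M : model) (sg : trace) (i : nat) (f : form) : Prop :=
  match f with
  | Var p => sg i p
  | Sharp s s' => forall t, lam M s t -> lam M s' t
  | Neg g => ~ sat M sg i g
  | And g h => sat M sg i g /\ sat M sg i h
  | Dia s g => exists t, lam M s t /\ sat M t i g
  | Box s g => forall t, lam M s t -> sat M t i g
  | Next g => sat M sg i.+1 g
  | Until g h => exists i', i <= i' /\ sat M sg i' h /\
                   (forall i'', i <= i'' -> i'' < i' -> sat M sg i'' g)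
  end.

Definition satisfiable (f : form) : Prop :=
  exists (M : model) (sg : trace), Pi M sg /\ sat M sg 0 f.

Fixpoint temporal_free (f : form) : Prop :=
  match f with
  | Var _ | Sharp _ _ => True
  | Neg g | Dia _ g | Box _ g => temporal_free g
  | And g h => temporal_free g /\ temporal_free h
  | Next _ | Until _ _ => False
  end.

Fixpoint ltl_psl (f : form) : Prop :=
  match f with
  | Var _ | Sharp _ _ => True
  | Neg g | Next g => ltl_psl g
  | And g h | Until g h => ltl_psl g /\ ltl_psl h
  | Dia _ g | Box _ g => temporal_free g
  end.

Fixpoint sharps (f : form) : seq (stp * stp) :=
  match f with
  | Var _ => [::]
  | Sharp s s' => [:: (s, s')]
  | Neg g | Dia _ g | Box _ g | Next g => sharps g
  | And g h | Until g h => sharps g ++ sharps h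
  end.

Definition Iset (f : form) : seq (stp * stp) := undup (sharps f).

Fixpoint vars (f : form) : seq prop_var :=
  match f with
  | Var p => [:: p]
  | Sharp _ _ => [::]
  | Neg g | Dia _ g | Box _ g | Next g => vars g
  | And g h | Until g h => vars g ++ vars h
  end.

(* A partition D = (I+, I-) of I is given by its characteristic function
   [plus] on I: (s,s') ∈ I+ iff (s,s') ∈ I and plus (s,s'); I- = I \ I+. *)
Fixpoint subst_sharps (plus : stp * stp -> bool) (f : form) : form :=
  match f with
  | Var p => Var p
  | Sharp s s' => if plus (s, s') then ftop else fbot
  | Neg g => Neg (subst_sharps plus g)
  | And g h => And (subst_sharps plus g) (subst_sharps plus h)
  | Dia s g => Dia s (subst_sharps plus g)
  | Box s g => Box s (subst_sharps plus g)
  | Next g => Next (subst_sharps plus g)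
  | Until g h => Until (subst_sharps plus g) (subst_sharps plus h)
  end.

Definition chi (f : form) (plus : stp * stp -> bool)
    (pv : stp * stp -> prop_var) : form :=
  G (And
       (bigAnd [seq Sharp ss.1 ss.2 | ss <- Iset f & plus ss])
       (bigAnd [seq And (Dia ss.1 (Var (pv ss))) (Neg (Dia ss.2 (Var (pv ss))))
               | ss <- Iset f & ~~ plus ss])).

Definition phiD (f : form) (plus : stp * stp -> bool)
    (pv : stp * stp -> prop_var) : form :=
  And (subst_sharps plus f) (chi f plus pv).

From mathcomp Require Import ssreflect ssrfun ssrbool eqtype ssrnat seq.
From Stdlib Require Import Classical ClassicalEpsilon.

(* Given a model M of phi, decide every s ≼ s' of I by its truth in M (the
   truth of s ≼ s' does not depend on trace or time), and relabel each trace
   t so that p_{s,s'} holds along it exactly when t lies outside λ(s').  On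
   the relabelled traces phi_D behaves like phi, and chi_D holds: a witness
   of λ(s) ⊈ λ(s') carries p_{s,s'}, no trace of λ(s') does.  Conversely, in
   a model of phi_D the conjunct chi_D forces the chosen partition to agree
   with the truth of the s ≼ s', so phi_D and phi coincide there. *)

Lemma sat_ftop M t i : sat M t i ftop.
Proof. by case. Qed.

Lemma sat_fbot M t i : ~ sat M t i fbot.
Proof. exact: (@^~ (sat_ftop M t i)). Qed.

Lemma sat_bigAnd M t i (T : eqType) (F : T -> form) (l : seq T) :
  sat M t i (bigAnd [seq F x | x <- l]) <-> (forall x, x \in l -> sat M t i (F x)).
Proof.
elim: l => [|x l IH] /=; first by split=> // _; apply: sat_ftop.
rewrite IH; split=> [[Fx Fl] y|Fl]; first by rewrite inE => /predU1P [->|/Fl].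
by split=> [|y ly]; apply: Fl; rewrite inE ?eqxx ?ly ?orbT.
Qed.

Lemma sat_G M t i g : sat M t i (G g) <-> (forall j, i <= j -> sat M t j g).
Proof.
split=> [Gg j ij|Gg [j [ij [ng _]]]]; last exact/ng/Gg.
by apply: NNPP => ng; apply: Gg; exists j; do !split=> //; move=> k _ _; apply: sat_ftop.
Qed.

Definition lam_incl (M : model) (s s' : stp) : Prop :=
  forall t, lam M s t -> lam M s' t.

Section Relabel.

Variables (M M' : model) (f : trace -> trace) (plus : stp * stp -> bool).
Variables (V : seq prop_var) (S : seq (stp * stp)).

Hypothesis f_id_on : forall t i q, q \in V -> f t i q = t i q.
Hypothesis lam_image : forall s t', lam M' s t' <-> exists2 t, lam M s t & t' = f t.
Hypothesis plus_incl : forall ss, ss \in S -> plus ss <-> lam_incl M ss.1 ss.2.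

(* [f] may identify traces, so s ≼ s' need not transfer from M to M'; it is
   harmless here because [subst_sharps] has replaced it by a constant. *)
Lemma sat_subst_sharps_relabel g :
  all (mem V) (vars g) -> all (mem S) (sharps g) ->
  forall t i, sat M' (f t) i (subst_sharps plus g) <-> sat M t i g.
Proof.
elim: g => [p|s s'|g IH|g IHg h IHh|s g IH|s g IH|g IH|g IHg h IHh] /=;
  rewrite ?all_cat ?andbT.
- by move=> Vp _ t i; rewrite f_id_on.
- move=> _ Sss t i; have := plus_incl (s, s') Sss; case: (plus _) => incl.
  + by split=> [_|_]; [apply/incl | apply: sat_ftop].
  + by split=> [/sat_fbot [] | /incl].
- by move=> Vg Sg t i; rewrite IH.
- by move=> /andP [Vg Vh] /andP [Sg Sh] t i; rewrite IHg // IHh.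
- move=> Vg Sg t i; split=> [[_ [/lam_image [u su ->] gu]] | [u [su gu]]].
  + by exists u; rewrite -IH.
  + by exists (f u); split; [apply/lam_image; exists u | rewrite IH].
- move=> Vg Sg t i; split=> [gs u su | gs _ /lam_image [u su ->]].
  + by rewrite -IH //; apply/gs/lam_image; exists u.
  + by rewrite IH //; apply: gs.
- by move=> Vg Sg t i; rewrite IH.
- move=> /andP [Vg Vh] /andP [Sg Sh] t i.
  split=> [] [j [ij [hj gk]]]; exists j; (split; [done | split]).
  + by rewrite -IHh.
  + by move=> k ik kj; rewrite -IHg //; apply: gk.
  + by rewrite IHh.
  + by move=> k ik kj; rewrite IHg //; apply: gk.
Qed.

End Relabel.

Lemma sat_subst_sharps (M : model) (plus : stp * stp -> bool) (S : seq (stp * stp)) g :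
  (forall ss, ss \in S -> plus ss <-> lam_incl M ss.1 ss.2) ->
  all (mem S) (sharps g) ->
  forall t i, sat M t i (subst_sharps plus g) <-> sat M t i g.
Proof.
move=> plus_incl Sg; apply: (@sat_subst_sharps_relabel M M id plus (vars g) S) => //.
by move=> s t; split=> [st | [u su ->]]; first exists t.
Qed.

Definition relabel_model (M : model) (f : trace -> trace) : model.
Proof.
refine (@Model (fun t' => exists2 t, Pi M t & t' = f t)
               (fun s t' => exists2 t, lam M s t & t' = f t) _ _ _ _).
- by have [t Pt] := Pi_nonempty M; exists (f t), t.
- by move=> s t' [t st ->]; exists t => //; apply: lam_sub st.
- by move=> s; have [t st] := lam_nonempty M s; exists (f t), t.
- by move=> t'; split=> [] [t Pt ->]; exists t => //; apply/lam_universal.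
Defined.

Lemma sharps_in_Iset phi : all (mem (Iset phi)) (sharps phi).
Proof. by apply/allP => ss; rewrite -mem_undup. Qed.

Definition lam_inclb (M : model) (ss : stp * stp) : bool :=
  if excluded_middle_informative (lam_incl M ss.1 ss.2) then true else false.

Lemma lam_inclP M ss : reflect (lam_incl M ss.1 ss.2) (lam_inclb M ss).
Proof. by rewrite /lam_inclb; case: excluded_middle_informative; constructor. Qed.

Lemma chi_lam_incl M plus phi pv t i :
  sat M t i (chi phi plus pv) ->
  forall ss, ss \in Iset phi -> plus ss <-> lam_incl M ss.1 ss.2.
Proof.
move=> /sat_G /(_ i (leqnn i)) [/sat_bigAnd incl_pos /sat_bigAnd incl_neg] ss Iss.
case plus_ss: (plus ss); split=> // incl.
- by apply: incl_pos; rewrite mem_filter plus_ss.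
- have /= [[u [su pu]] not_pu] : sat M t i (And (Dia ss.1 (Var (pv ss)))
                                              (Neg (Dia ss.2 (Var (pv ss))))).
    by apply: incl_neg; rewrite mem_filter plus_ss.
  by case: not_pu; exists u; split; first exact: incl.
Qed.

Section Marking.

Variables (phi : form) (pv : stp * stp -> prop_var) (M : model).

Hypothesis pv_inj : {in Iset phi &, injective pv}.
Hypothesis pv_fresh : forall ss, ss \in Iset phi -> pv ss \notin vars phi.

Definition mark (t : trace) : trace := fun i q =>
  if q \in vars phi then t i q
  else exists ss, [/\ ss \in Iset phi, pv ss = q & ~ lam M ss.2 t].

Lemma sat_chi_mark t i :
  sat (relabel_model M mark) (mark t) i (chi phi (lam_inclb M) pv).
Proof.
apply/sat_G => j _; split; apply/sat_bigAnd => ss; rewrite mem_filter.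
- by case/andP=> /lam_inclP incl _ _ [u su ->]; exists u; first exact: incl.
- case/andP=> /lam_inclP not_incl Iss.
  have mark_pv v : mark v j (pv ss) = exists ss', [/\ ss' \in Iset phi, pv ss' = pv ss
                                                 & ~ lam M ss'.2 v].
    by rewrite /mark (negbTE (pv_fresh ss Iss)).
  have [u [su not_s'u]] : exists u, lam M ss.1 u /\ ~ lam M ss.2 u.
    apply: NNPP => none; apply: not_incl => u su; apply: NNPP => not_s'u.
    by apply: none; exists u.
  split; first by exists (mark u); split; [exists u | rewrite /= mark_pv; exists ss].
  by move=> [_ [[v s'v ->]]]; rewrite /= mark_pv => [[ss' [Iss' /pv_inj -> //]]].
Qed.

Lemma satisfiable_phiD_mark sg :
  Pi M sg -> sat M sg 0 phi -> satisfiable (phiD phi (lam_inclb M) pv).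
Proof.
move=> Psg phi_sg; exists (relabel_model M mark), (mark sg).
split; first by exists sg.
split; last exact: sat_chi_mark.
apply/(@sat_subst_sharps_relabel M _ mark _ (vars phi) (Iset phi)) => //.
- by move=> t i q q_phi; rewrite /mark q_phi.
- by move=> ss _; split=> /lam_inclP.
- exact: sharps_in_Iset.
Qed.

End Marking.

Theorem lemma3 (phi : form) (pv : stp * stp -> prop_var) :
  ltl_psl phi ->
  (* the p_{s,s'} are pairwise distinct ... *)
  {in Iset phi &, injective pv} ->
  (* ... and fresh: they do not occur in phi *)
  (forall ss, ss \in Iset phi -> pv ss \notin vars phi) ->
  satisfiable phi <->
  exists plus : stp * stp -> bool, satisfiable (phiD phi plus pv).
Proof.
move=> _ pv_inj pv_fresh; split.
- move=> [M [sg [Psg phi_sg]]]; exists (lam_inclb M).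
  exact: satisfiable_phiD_mark Psg phi_sg.
- move=> [plus [M [sg [Psg [phiD_sg chi_sg]]]]]; exists M, sg; split=> //.
  rewrite -(@sat_subst_sharps M plus (Iset phi)); first exact: phiD_sg.
  + exact: chi_lam_incl chi_sg.
  + exact: sharps_in_Iset.
Qed.
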